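(* Let $\mathcal{A}=\{d,u\}$. Consider the double comb context tree on $\mathcal{A}$, whose contexts are the words $u^k d$ and $d^k u$ for $k\geq 1$, and for each context $c$ let $q_c$ be a probability measure on $\mathcal{A}$. Let $(U_n)_{n\geq 0}$ be the associated variable length Markov chain (VLMC), started from a right-infinite word $U_0$ with $X_{-1}=u$, $X_0=d$, and for $n\geq 0$ let $X_n$ denote the first (leftmost) letter of $U_n$, so that $U_n=X_nX_{n-1}\cdots X_0X_{-1}\cdots$. Assume that for all $\alpha\neq\beta$ in $\mathcal{A}$, $\lim_{n\to\infty}\prod_{k=1}^{n}q_{\alpha^k\beta}(\alpha)=0$. Define the jump times $B_0=0$ and $B_{n+1}=\inf\{k>B_n : X_k\neq X_{k-1}\}$ for $n\geq 0$, the sojourn times $T_0=0$, $T_n=B_n-B_{n-1}$ for $n\geq 1$, and $J_n=X_{B_n}$ for $n\geq 0$. Then $(J_n,T_n)_{n\geq 0}$ is a Markov renewal chain with state space $\mathcal{A}\times\mathbb{N}$ whose semi-Markov kernel is given, for $\alpha\neq\beta$ in $\mathcal{A}$ and $k\geq 1$, by \[ p_{\alpha,\beta}(k)=\Big(\prod_{j=1}^{k-1}q_{\alpha^j\beta}(\alpha)\Big)\,q_{\alpha^k\beta}(\beta), \] (and $p_{\alpha,\alpha}(k)=0$, $p_{\alpha,\beta}(0)=0$), and the sequence of increments $(X_j)_{j\geq 0}$ is the $\mathcal{A}$-valued semi-Markov chain associated with $(J_n,T_n)_{n\geq0}$, i.e. $X_j=J_n$ whenever $B_n\leq j<B_{n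+1}$.
   Context: A VLMC defined by a context tree $\mathcal{T}$ (a saturated tree of finite words on $\mathcal{A}$ with at most countably many infinite branches; contexts are its leaves and infinite branches) and probability measures $(q_c)_c$ indexed by the contexts is the Markov chain $(U_n)$ on right-infinite words over $\mathcal{A}$ with transitions $\mathbb{P}(U_{n+1}=\alpha U_n\mid U_n)=q_{\mathrm{pref}(U_n)}(\alpha)$, where $\mathrm{pref}(w)$ is the unique context that is a prefix of $w$ (for the double comb, $\mathrm{pref}(w)=\alpha^k\beta$ when $w$ begins with exactly $k$ copies of $\alpha$ followed by $\beta\neq\alpha$). The walk $S_n=\sum_{\ell=1}^n X_\ell$ (with $d=-1$, $u=+1$) is the one-dimensional persistent random walk. A Markov chain $(J_n,T_n)_{n\geq0}$ on $E\times\mathbb{N}$ is a Markov renewal chain if $\mathbb{P}(J_{n+1}=b,T_{n+1}=k\mid J_n=a,T_n=j)=\mathbb{P}(J_{n+1}=b,T_{n+1}=k\mid J_n=a)=:p_{a,b}(k)$ for all $n,a,b,j,k$, with $p_{a,b}(0)=0$; the family $(p_{a,b}(k))$ is its semi-Markov kernel. If $T_0=0$ and $B_n=\sum_{i=0}^nT_i$, the associated semi-Markov chain is $(Z_j)_{j\geq0}$ with $Z_j=J_n$ for $B_n\leq j<B_{n+1}$. *)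

From HB Require Import structures.
From mathcomp Require Import all_boot all_order all_algebra.
From mathcomp Require Import all_classical all_reals all_analysis.
Set Implicit Arguments. Unset Strict Implicit. Unset Printing Implicit Defensive.
Import Order.TTheory GRing.Theory Num.Theory.

Definition letter := bool.
Definition lu : letter := true.
Definition ld : letter := false.

(* Given a finite history h 0, ..., h n (= X_0, ..., X_n), the extended
   history g with g 0 = X_{-1} = u and g (i+1) = X_i. *)
Definition ext_hist (h : nat -> letter) (i : nat) : letter :=
  match i with 0 => lu | i'.+1 => h i' end.

Fixpoint runlen (g : nat -> letter) (a : letter) (m : nat) : nat :=
  match m with
  | 0 => if g 0 == a then 1 else 0
  | m'.+1 => if g m == a then (runlen g a m').+1 else 0
  end.

(* pref(U_n) for U_n = h n h (n-1) ... h 0 u ... (with h 0 = d):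
   it is the context alpha^k beta with alpha = h n and k = ctx_len h n. *)
Definition ctx_len (h : nat -> letter) (n : nat) : nat :=
  runlen (ext_hist h) (h n) n.+1.

(* The probability measures q_c indexed by contexts c = alpha^k beta
   (k >= 1, beta = ~~ alpha) are encoded as q alpha k : letter -> R. *)

(* jump times:  jump_time x n m  <->  B_n = m (B_0 = 0,
   B_{n+1} = inf {k > B_n | x k <> x (k-1)}) *)
Fixpoint jump_time (x : nat -> letter) (n m : nat) : Prop :=
  match n with
  | 0 => m = 0%N
  | n'.+1 => exists m', jump_time x n' m' /\ (m' < m)%N /\ x m != x m.-1 /\
             (forall k, (m' < k < m)%N -> x k = x k.-1)
  end.

Definition smkernel (R : realType) (q : letter -> nat -> letter -> R)
  (a b : letter) (k : nat) : R :=
  if (a != b) && (0 < k)%N then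
    ((\prod_(1 <= j < k) q a j a) * q a k b)%R
  else 0%R.

(* sum of sojourn times t 0 + ... + t i, i.e. B_i when T_l = t l *)
Definition psum (t : nat -> nat) (i : nat) : nat := \sum_(l < i.+1) t l.

(* event {(J_i, T_i) = (j i, t i) for all i <= n} on the path x *)
Definition MR_event (x : nat -> letter) (n : nat) (j : nat -> letter)
  (t : nat -> nat) : Prop :=
  t 0 = 0%N /\
  forall i, (i <= n)%N -> jump_time x i (psum t i) /\ x (psum t i) = j i.

From HB Require Import structures.
From mathcomp Require Import all_boot all_order all_algebra.
From mathcomp Require Import all_classical all_reals all_analysis.
From mathcomp Require Import zify.
Import Order.TTheory GRing.Theory Num.Theory.
Local Open Scope classical_set_scope.
Local Open Scope ring_scope.
Set Implicit Arguments.
Unset Strict Implicit.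

(* The jump times are stopping times of the letter process: whether
   [(J_i, T_i) = (j i, t i)] for all [i <= n] is decided by [X_0, ..., X_{B_n}],
   and on this event the context at time [B_n + l] is [a^(l+1) b], with
   [a = J_n], for as long as the run of [a] begun at [B_n] lasts.  Conditioning
   one letter at a time along the run, each further [a] contributes the factor
   [q_{a^l b}(a)] and the exit after [k] letters the factor [q_{a^k b}(b)]:
   this is the kernel [p_{a,b}(k)].  The probability that a run never ends is
   bounded by the same products, which tend to 0; hence almost surely every run
   ends and all jump times are finite. *)

Definition prefix_eq (M : nat) (g g' : nat -> letter) : Prop :=
  forall i, (i <= M)%N -> g i = g' i.

Definition prefix_determined (M : nat) (S : set (nat -> letter)) : Prop :=
  forall g g', prefix_eq M g g' -> S g -> S g'.

Lemma prefix_eq_sym M g g' : prefix_eq M g g' -> prefix_eq M g' g.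
Proof. by move=> E i /E. Qed.

Lemma prefix_eq_le M M' g g' : (M' <= M)%N -> prefix_eq M g g' -> prefix_eq M' g g'.
Proof. by move=> le E i iM'; apply: E; apply: leq_trans le. Qed.

Section JumpTimes.
Variable x : nat -> letter.

Definition run_start (N : nat) : Prop := N = 0%N \/ x N != x N.-1.

Lemma jump_time_run_start n m : jump_time x n m -> run_start m.
Proof. by case: n => [|n] /= => [->|[? [_ [_ []]]]]; [left|right]. Qed.

Lemma jump_time_uniq n m1 m2 : jump_time x n m1 -> jump_time x n m2 -> m1 = m2.
Proof.
elim: n m1 m2 => [|n IH] m1 m2 /=; first by move=> -> ->.
move=> [p1 [J1 [lt1 [ch1 c1]]]] [p2 [J2 [lt2 [ch2 c2]]]].
rewrite -(IH _ _ J1 J2) in lt2 c2.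
case: (ltngtP m1 m2) => // h.
- by rewrite c2 ?lt1 ?h ?eqxx in ch1.
- by rewrite c1 ?lt2 ?h ?eqxx in ch2.
Qed.

Lemma jump_timeS n m m' : jump_time x n m ->
  jump_time x n.+1 m' <->
  [/\ (m < m')%N, x m' != x m'.-1 & forall k, (m < k < m')%N -> x k = x k.-1].
Proof.
move=> J; split=> /= [[p [Jp [lt [ch c]]]]|[lt ch c]]; last by exists m.
by rewrite (jump_time_uniq J Jp).
Qed.

Lemma jump_time_const n m m' i :
  jump_time x n m -> jump_time x n.+1 m' -> (m <= i < m')%N -> x i = x m.
Proof.
move=> J /(jump_timeS _ J) [_ _ c].
elim: i => [|i IH] /andP[mi im']; first by move: mi; rewrite leqn0 => /eqP ->.
case: (ltngtP m i.+1) mi => // [mi _|-> //].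
by rewrite c ?mi // IH // -ltnS mi ltnW.
Qed.

Lemma jump_time_next n m : jump_time x n m ->
  (exists m', (m < m')%N && (x m' != x m'.-1)) -> exists m', jump_time x n.+1 m'.
Proof.
move=> J ex; case: (ex_minnP ex) => m' /andP[lt ch] min; exists m'.
apply/(jump_timeS _ J); split=> // k /andP[mk km'].
apply/eqP/negPn/negP => chk.
by move: (min k); rewrite mk chk leqNgt km' => /(_ isT).
Qed.

Lemma jump_times_or_final_run :
  (forall n, exists m, jump_time x n m) \/
  exists N, run_start N /\ forall l, x (N + l)%N = x N.
Proof.
have [|/existsNP[n nJ]] := pselect (forall n, exists m, jump_time x n m).
  by left.
elim: n nJ => [|n IH] nJ; first by case: nJ; exists 0%N.
have [[m J]|] := pselect (exists m, jump_time x n m); last exact: IH.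
right; exists m; split; first exact: jump_time_run_start J.
elim=> [|l IH']; first by rewrite addn0.
apply: contrapT => ch; apply: nJ; apply: jump_time_next J _.
exists (m + l).+1; rewrite ltnS leq_addr /= IH'.
by apply/eqP; rewrite -addnS.
Qed.

End JumpTimes.

Lemma eq_jump_time x y n M :
  prefix_eq M x y -> jump_time x n M -> jump_time y n M.
Proof.
elim: n M => [|n IH] M E //= [p [J [lt [ch c]]]].
exists p; split; first by apply: IH J; apply: prefix_eq_le E; apply: ltnW.
split=> //; split; first by rewrite -!E // leq_pred.
move=> k /andP[pk kM]; rewrite -!E ?(leq_trans (leq_pred k)) ?(ltnW kM) //.
by apply: c; rewrite pk.
Qed.

Definition run_from (N : nat) (a : letter) (i : nat) : set (nat -> letter) :=
  [set g | forall l, (l <= i)%N -> g (N + l)%N = a].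

Definition run_begins (N : nat) (a : letter) : set (nat -> letter) :=
  [set g | run_start g N /\ g N = a].

Definition final_run (N : nat) (a : letter) : set (nat -> letter) :=
  \bigcap_i (run_begins N a `&` run_from N a i).

Lemma run_fromS N a i :
  run_from N a i.+1 = run_from N a i `&` [set g | g (N + i).+1 = a].
Proof.
apply/seteqP; split=> g /= => [r|[r ga] l].
  by split=> [l li|]; [apply: r; apply: leqW|rewrite -addnS; apply: r].
by rewrite leq_eqVlt => /orP[/eqP->|/r//]; rewrite addnS.
Qed.

Lemma prefix_determined_run_from N a i : prefix_determined (N + i) (run_from N a i).
Proof. by move=> g g' E r l li; rewrite -E ?leq_add2l ?r. Qed.

Lemma prefix_determined_run_begins N a : prefix_determined N (run_begins N a).
Proof.
move=> g g' E [st ga]; split; last by rewrite -E.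
by case: st => [|ch]; [left|right; rewrite -!E ?leq_pred].
Qed.

Lemma run_fromP (x : nat -> letter) N i : run_from N (x N) i x <->
  forall k, (N < k <= N + i)%N -> x k = x k.-1.
Proof.
split=> [r k /andP[Nk ki]|c].
  have e l : (N <= l <= N + i)%N -> x l = x N.
    by move=> /andP[Nl li]; rewrite -(subnKC Nl) r // leq_subLR.
  have Nk' : (N <= k.-1)%N by rewrite -ltnS (ltn_predK Nk).
  rewrite (e k) ?(ltnW Nk) // (e k.-1) // Nk'.
  by rewrite (leq_trans (leq_pred k)).
elim=> [|l IH] li; first by rewrite addn0.
rewrite addnS c /=; first exact: IH (ltnW li).
by rewrite ltnS leq_addr -addnS leq_add2l.
Qed.

Lemma eq_runlen (g g' : nat -> letter) a M :
  prefix_eq M g g' -> runlen g a M = runlen g' a M.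
Proof.
elim: M => [|M IH] E /=; first by rewrite E.
by rewrite E // IH //; apply: prefix_eq_le E.
Qed.

Lemma eq_ctx_len (h h' : nat -> letter) n :
  prefix_eq n h h' -> ctx_len h n = ctx_len h' n.
Proof.
by rewrite /ctx_len => E; rewrite E //; apply: eq_runlen => -[|i] //= /E.
Qed.

Lemma runlen_run (g : nat -> letter) a N s : g N != a ->
  (forall l, (0 < l <= s)%N -> g (N + l)%N = a) -> runlen g a (N + s) = s.
Proof.
elim: s => [|s IH] gN r.
  by rewrite addn0; case: N gN {r} => [|N] /= gN; rewrite (negbTE gN).
rewrite addnS /= -addnS r ?leqnn // eqxx IH // => l /andP[l0 ls].
by rewrite r // l0 ltnW.
Qed.

(* For [N = 0] the run is preceded by [X_{-1} = u], which differs from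
   [g 0 = d]. *)
Lemma ctx_len_run (g : nat -> letter) N a i : g 0%N = ld ->
  run_start g N -> run_from N a i g -> ctx_len g (N + i) = i.+1.
Proof.
move=> g0 st r; rewrite /ctx_len r // -addnS; apply: runlen_run => [|[|l] //].
  case: N st r => [_|N [//|st]] r /=; first by rewrite -(r 0%N) // g0.
  by rewrite -(r 0%N) // addn0 eq_sym.
by move=> /andP[_ li]; rewrite addnS /= r.
Qed.

Lemma psumS t i : psum t i.+1 = (psum t i + t i.+1)%N.
Proof. by rewrite /psum big_ord_recr. Qed.

Lemma psum_mono t i n : (i <= n)%N -> (psum t i <= psum t n)%N.
Proof.
elim: n => [|n IH]; first by rewrite leqn0 => /eqP->.
rewrite leq_eqVlt => /orP[/eqP->//|/IH le_in].
by rewrite psumS (leq_trans le_in) ?leq_addr.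
Qed.

Lemma prefix_determined_MR_event n j t :
  prefix_determined (psum t n) (fun x => MR_event x n j t).
Proof.
move=> x y E [t0 MR]; split=> // i ni; have [J xi] := MR i ni.
have E' := prefix_eq_le (psum_mono t ni) E.
by split; [apply: eq_jump_time J|rewrite -E'].
Qed.

Lemma MR_eventS (x : nat -> letter) n j t :
  MR_event x n.+1 j t <-> [/\ MR_event x n j t,
    jump_time x n.+1 (psum t n + t n.+1)%N & x (psum t n + t n.+1)%N = j n.+1].
Proof.
rewrite -psumS; split=> [[t0 MR]|[[t0 MR] J xn]].
  have [J xn] := MR n.+1 (leqnn _).
  by split=> //; split=> // i ni; apply: MR; apply: leqW.
by split=> // i; rewrite leq_eqVlt => /orP[/eqP->|/MR].
Qed.

Lemma MR_eventS_run (x : nat -> letter) n j t i : t n.+1 = i.+1 -> j n != j n.+1 ->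
  MR_event x n.+1 j t <-> [/\ MR_event x n j t, run_from (psum t n) (j n) i x
                            & x (psum t n + i).+1 = j n.+1].
Proof.
move=> tn ab; rewrite MR_eventS tn addnS.
split=> [[MR /(jump_timeS _ (proj1 (MR.2 n (leqnn n)))) [_ _ c] ->]|[MR r xb]].
  have [_ <-] := MR.2 n (leqnn n); split=> //.
  by apply/run_fromP => k /andP[Nk ki]; rewrite c // Nk ltnS.
have [J xN] := MR.2 n (leqnn n); split=> //.
apply/(jump_timeS _ J); split; first by rewrite ltnS leq_addr.
  by rewrite xb /= r // eq_sym.
rewrite -xN in r; move/run_fromP: r => c k /andP[Nk ki].
by apply: c; rewrite Nk -ltnS.
Qed.

Lemma MR_eventS_degenerate (x : nat -> letter) n j t :
  ~~ ((j n != j n.+1) && (0 < t n.+1)%N) -> ~ MR_event x n.+1 j t.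
Proof.
move=> deg /MR_eventS [MR J xb]; have [J0 xN] := MR.2 n (leqnn n).
have [lt ch _] := (jump_timeS _ J0).1 J.
case/nandP: deg => [/negPn/eqP ab|]; last first.
  by rewrite -eqn0Ngt => /eqP t0; rewrite t0 addn0 ltnn in lt.
rewrite xb (jump_time_const J0 J) ?xN ?ab ?eqxx // in ch.
by apply/andP; split; lia.
Qed.

Definition cylinder (T : Type) (X : nat -> T -> letter) (r : nat)
    (g : nat -> letter) : set T :=
  [set w | forall i, (i <= r)%N -> X i w = g i].

Definition path (T : Type) (X : nat -> T -> letter) (w : T) : nat -> letter :=
  fun i => X i w.

Definition upd (g : nat -> letter) (k : nat) (v : letter) : nat -> letter :=
  fun i => if i == k then v else g i.

Lemma upd_prefix g r v : prefix_eq r (upd g r.+1 v) g.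
Proof. by move=> i ir; rewrite /upd ltn_eqF. Qed.

Section Cylinders.
Variables (T : Type) (X : nat -> T -> letter).

Lemma eq_cylinder r g g' : prefix_eq r g g' -> cylinder X r g = cylinder X r g'.
Proof.
by move=> E; apply/seteqP; split=> w wg i ir; rewrite wg // E.
Qed.

Lemma cylinderS r g :
  cylinder X r.+1 g = cylinder X r g `&` [set w | X r.+1 w = g r.+1].
Proof.
apply/seteqP; split=> w /=.
  by move=> wg; split=> [i ir|]; apply: wg => //; apply: leqW.
by move=> [wg wr] i; rewrite leq_eqVlt => /orP[/eqP->|/wg].
Qed.

Lemma cylinder_split r g : cylinder X r g =
  cylinder X r.+1 (upd g r.+1 true) `|` cylinder X r.+1 (upd g r.+1 false).
Proof.
rewrite !cylinderS (eq_cylinder (@upd_prefix g r true))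
  (eq_cylinder (@upd_prefix g r false)) -setIUr /upd eqxx.
by apply/esym/setIidPl => w _ /=; case: (X r.+1 w); [left|right].
Qed.

Lemma cylinder_split_disj r g :
  cylinder X r.+1 (upd g r.+1 true) `&` cylinder X r.+1 (upd g r.+1 false) = set0.
Proof.
apply/seteqP; split=> w // [wt wf].
by move: (wt r.+1 (leqnn _)) (wf r.+1 (leqnn _)); rewrite /upd eqxx => ->.
Qed.

End Cylinders.

Section VLMC.
Context (R : realType) (dsp : measure_display) (T : measurableType dsp).
Variables (P : probability T R) (q : letter -> nat -> letter -> R).
Variable X : nat -> T -> letter.
Hypothesis measurable_X : forall n a, measurable [set w | X n w = a].
Hypothesis X0 : forall w, X 0%N w = ld.
Hypothesis P_cylinderS : forall n h, h 0%N = ld ->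
  P (cylinder X n.+1 h) =
  ((q (h n) (ctx_len h n) (h n.+1))%:E * P (cylinder X n h))%E.

Lemma measurable_cylinder r g : measurable (cylinder X r g).
Proof.
elim: r g => [|r IH] g; last by rewrite cylinderS; apply: measurableI.
suff -> : cylinder X 0 g = [set w | X 0%N w = g 0%N] by [].
apply/seteqP; split=> w /= wg; first exact: wg.
by move=> i; rewrite leqn0 => /eqP->.
Qed.

Lemma refine_cylinders (Q : set T -> Prop) (E : set T) m :
  (forall A1 A2, Q A1 -> Q A2 -> A1 `&` A2 = set0 -> Q (A1 `|` A2)) ->
  (forall g, Q (E `&` cylinder X m g)) -> Q E.
Proof.
move=> QU Qm.
have Qr r : (forall g, Q (E `&` cylinder X r.+1 g)) ->
    forall g, Q (E `&` cylinder X r g).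
  move=> Qr g; rewrite (cylinder_split X r g) setIUr; apply: QU => //.
  by rewrite setIACA setIid cylinder_split_disj setI0.
have Qk k r : (r + k = m)%N -> forall g, Q (E `&` cylinder X r g).
  by elim: k r => [|k IH] r; [rewrite addn0 => ->|rewrite addnS -addSn => /IH/Qr].
suff -> : E = E `&` cylinder X 0 (fun=> ld) by exact: Qk m 0%N (add0n m) _.
by apply/seteqP; split=> [w Ew|w []//]; split=> // i; rewrite leqn0 => /eqP->.
Qed.

(* [P (B | A) = c], in product form so that it also makes sense when
   [P A = 0]. *)
Definition has_cond_prob (B : set T) (c : R) (A : set T) : Prop :=
  measurable A /\ P (A `&` B) = (c%:E * P A)%E.

Lemma has_cond_prob0 B c : has_cond_prob B c set0.
Proof. by split; [exact: measurable0|rewrite set0I measure0 mule0]. Qed.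

Lemma has_cond_probU B c A1 A2 : measurable B ->
  has_cond_prob B c A1 -> has_cond_prob B c A2 -> A1 `&` A2 = set0 ->
  has_cond_prob B c (A1 `|` A2).
Proof.
move=> mB [mA1 e1] [mA2 e2] disj; split; first exact: measurableU.
rewrite setIUl !measureU ?ge0_muleDr -?e1 -?e2 //; try exact: measurableI.
by rewrite setIACA disj set0I.
Qed.

Lemma prob_next_letter m (S : set (nat -> letter)) b c :
  prefix_determined m S ->
  (forall g, g 0%N = ld -> S g -> q (g m) (ctx_len g m) b = c) ->
  has_cond_prob [set w | X m.+1 w = b] c (path X @^-1` S).
Proof.
move=> S_det Sc; apply: (refine_cylinders (m := m)) => [A1 A2|g].
  by apply: has_cond_probU; apply: measurable_X.
have [[g0 Sg]|nS] := pselect (g 0%N = ld /\ S g); last first.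
  suff -> : path X @^-1` S `&` cylinder X m g = set0 by apply: has_cond_prob0.
  apply/seteqP; split=> w //= [Sw wg]; apply: nS.
  by split; [rewrite -wg ?X0|apply: S_det Sw].
have -> : path X @^-1` S `&` cylinder X m g = cylinder X m g.
  apply/seteqP; split=> [w []//|w wg]; split=> //.
  by apply: S_det Sg; apply: prefix_eq_sym.
split; first exact: measurable_cylinder.
have ug := @upd_prefix g m b.
have -> : cylinder X m g `&` [set w | X m.+1 w = b] = cylinder X m.+1 (upd g m.+1 b).
  by rewrite cylinderS (eq_cylinder X ug) /upd eqxx.
rewrite P_cylinderS; last by rewrite ug.
by rewrite (eq_cylinder X ug) (eq_ctx_len ug) (ug m) // /upd eqxx Sc.
Qed.

Section Runs.
Variables (N : nat) (a : letter) (S0 : set (nat -> letter)).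
Hypothesis S0_det : prefix_determined N S0.
Hypothesis S0_start : forall g, g 0%N = ld -> S0 g -> run_begins N a g.

Lemma prob_run_exit i b : has_cond_prob [set w | X (N + i).+1 w = b] (q a i.+1 b)
  (path X @^-1` (S0 `&` run_from N a i)).
Proof.
apply: prob_next_letter => [g g' E [S0g r]|g g0 [S0g r]].
  split; first by apply: S0_det S0g; apply: prefix_eq_le E; apply: leq_addr.
  exact: prefix_determined_run_from E r.
have [st _] := S0_start g0 S0g.
by rewrite r // (ctx_len_run g0 st r).
Qed.

Lemma run_from0_event : path X @^-1` (S0 `&` run_from N a 0) = path X @^-1` S0.
Proof.
apply/seteqP; split=> w /=; first by case.
move=> S0w; split=> // l; rewrite leqn0 => /eqP->; rewrite addn0.
by case: (S0_start (X0 w) S0w).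
Qed.

Lemma prob_run i : P (path X @^-1` (S0 `&` run_from N a i)) =
  ((\prod_(1 <= l < i.+1) q a l a)%:E * P (path X @^-1` S0))%E.
Proof.
elim: i => [|i IH]; first by rewrite big_geq // mul1e run_from0_event.
rewrite run_fromS setIA preimage_setI (prob_run_exit i a).2 IH.
by rewrite [in RHS]big_nat_recr //= muleA -EFinM mulrC.
Qed.

End Runs.

Lemma prob_MR_eventS n j t :
  P [set w | MR_event (path X w) n.+1 j t] =
  ((smkernel q (j n) (j n.+1) (t n.+1))%:E * P [set w | MR_event (path X w) n j t])%E.
Proof.
rewrite /smkernel; case: ifPn => [/andP[ab]|deg]; last first.
  rewrite mul0e -(measure0 P); congr (P _).
  by apply/seteqP; split=> w // /(MR_eventS_degenerate deg).
case tn : (t n.+1) => [//|i] _.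
set MR := fun x => MR_event x n j t; set N := psum t n.
have MR_start g : g 0%N = ld -> MR g -> run_begins N (j n) g.
  by move=> _ [_ /(_ n (leqnn n)) [J gN]]; split=> //; apply: jump_time_run_start J.
have -> : [set w | MR_event (path X w) n.+1 j t] =
    path X @^-1` (MR `&` run_from N (j n) i) `&` [set w | X (N + i).+1 w = j n.+1].
  apply/seteqP; split=> w /=; rewrite (MR_eventS_run _ tn ab).
    by case.
  by case=> -[].
rewrite (prob_run_exit (@prefix_determined_MR_event n j t) MR_start i _).2.
rewrite (prob_run (@prefix_determined_MR_event n j t) MR_start).
by rewrite muleA -EFinM mulrC.
Qed.

Hypothesis q_ge0 : forall a k b, (0 < k)%N -> 0 <= q a k b.
Hypothesis q_run_cvg0 :
  forall a, (fun n : nat => \prod_(1 <= k < n.+1) q a k a) @ \oo --> 0.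

Lemma final_run_negligible N a : P.-negligible (path X @^-1` final_run N a).
Proof.
have S0_det := @prefix_determined_run_begins N a.
have S0_start g : g 0%N = ld -> run_begins N a g -> run_begins N a g by [].
have mS0 : measurable (path X @^-1` run_begins N a).
  rewrite -(run_from0_event S0_start).
  by case: (prob_run_exit S0_det S0_start 0 a).
rewrite preimage_bigcap; set Z := \bigcap_i _.
have mZ : measurable Z.
  by apply: bigcapT_measurable => i; case: (prob_run_exit S0_det S0_start i a).
apply/negligibleP => //; apply/eqP; rewrite eq_le measure_ge0 andbT.
have PZ_le i : (P Z <= (\prod_(1 <= l < i.+1) q a l a)%:E)%E.
  have [mRi _] := prob_run_exit S0_det S0_start i a.
  apply: (@le_trans _ _ (P (path X @^-1` (run_begins N a `&` run_from N a i)))).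
    by apply: le_measure; rewrite ?inE //; exact: bigcap_inf.
  rewrite (prob_run S0_det S0_start) -[leRHS]mule1 lee_pmul //.
  - rewrite lee_fin big_nat_cond prodr_ge0 // => l /andP[/andP[l0 _] _].
    exact: q_ge0.
  - exact: probability_le1.
rewrite -(fineK (fin_num_measure P _ mZ)) lee_fin.
apply: (cvgr_to_ge (q_run_cvg0 a)); apply: nearW => i.
by rewrite -lee_fin fineK ?fin_num_measure.
Qed.

Lemma ae_jump_times : {ae P, forall w n, exists m, jump_time (path X w) n m}.
Proof.
pose Z N a := path X @^-1` final_run N a.
apply: (@negligibleS _ _ _ _ (\bigcup_N (Z N true `|` Z N false))).
  move=> w /= nJ; case: (jump_times_or_final_run (path X w)) => [//|[N [st fin]]].
  exists N => //; suff ZN : Z N (X N w) w by case: (X N w) ZN; [left|right].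
  by move=> i _; split=> // l _; apply: fin.
by apply: negligible_bigcup => N; apply: negligibleU; apply: final_run_negligible.
Qed.

End VLMC.

Theorem mainTheorem1 (R : realType) (dsp : measure_display)
  (T : measurableType dsp) (P : probability T R)
  (q : letter -> nat -> letter -> R) (X : nat -> T -> letter) :
  (* q_{alpha^k beta} is a probability measure on A for every context *)
  (forall a k b, (0 < k)%N -> 0 <= q a k b) ->
  (forall a k, (0 < k)%N -> q a k lu + q a k ld = 1) ->
  (* the X_n are random variables *)
  (forall n a, measurable [set w | X n w = a]) ->
  (* initial word: X_{-1} = u (built into ext_hist), X_0 = d *)
  (forall w, X 0%N w = ld) ->
  (* VLMC transitions: P(U_{n+1} = b U_n | U_n) = q_{pref(U_n)}(b) *)
  (forall (n : nat) (h : nat -> letter), h 0%N = ld ->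
     P [set w | forall i, (i <= n.+1)%N -> X i w = h i] =
     ((q (h n) (ctx_len h n) (h n.+1))%:E *
      P [set w | forall i, (i <= n)%N -> X i w = h i])%E) ->
  (* non-degeneracy assumption *)
  (forall a, (fun n : nat => \prod_(1 <= k < n.+1) q a k a) @ \oo --> 0) ->
  (* conclusions *)
  ({ae P, forall w, forall n, exists m, jump_time (fun i => X i w) n m}
   /\
   (forall (n : nat) (j : nat -> letter) (t : nat -> nat),
      P [set w | MR_event (fun i => X i w) n.+1 j t] =
      ((smkernel q (j n) (j n.+1) (t n.+1))%:E *
       P [set w | MR_event (fun i => X i w) n j t])%E)
   /\
   (forall w (n m m' i : nat),
      jump_time (fun l => X l w) n m ->
      jump_time (fun l => X l w) n.+1 m' ->
      (m <= i < m')%N -> X i w = X m w)).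
Proof.
move=> q_ge0 _ measurable_X X0 P_cylinderS q_run_cvg0; split; [|split].
- exact: (ae_jump_times measurable_X X0 P_cylinderS q_ge0 q_run_cvg0).
- exact: (prob_MR_eventS measurable_X X0 P_cylinderS).
- move=> w n m m' i; exact: jump_time_const.
Qed.
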